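(* Let $r\ge 1$ and consider the polynomial algebra $\mathbb{C}[a_u: u\in\mathbb{F}_2^r\setminus\{\mathbf{0}\}]$. Then $$\operatorname{span}_{\mathbb{Z}}\Big\{\sum_{u:\,u\cdot v=1}a_u\ \Big|\ v\in\mathbb{F}_2^r\Big\}=\operatorname{span}_{\mathbb{Z}}\Big\{2^{|S|-1}\sum_{u:\,u_S=d}a_u\ \Big|\ \emptyset\neq S\subseteq[r],\ d\in\mathbb{F}_2^{|S|}\setminus\{\mathbf{0}\}\Big\}.$$
   Context: $[r]=\{1,\dots,r\}$. All sums range over $u\in\mathbb{F}_2^r\setminus\{\mathbf{0}\}$ (the conditions force $u\neq\mathbf{0}$). For $S\subseteq[r]$ and $d\in\mathbb{F}_2^{|S|}$, $u_S=d$ means that the coordinates of $u$ indexed by $S$, listed in increasing order of index, equal the entries of $d$. *)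

From HB Require Import structures.
From mathcomp Require Import all_boot all_order all_algebra all_field.
From mathcomp Require Import mpoly.
Set Implicit Arguments. Unset Strict Implicit. Unset Printing Implicit Defensive.
Import Order.TTheory GRing.Theory Num.Theory.
Local Open Scope ring_scope.

Definition NZ (r : nat) := {u : 'rV['F_2]_r | u != 0}.

Definition polyAlg (r : nat) := {mpoly algC[#|{: NZ r}|]}.

Definition avar (r : nat) (u : NZ r) : polyAlg r := 'X_(enum_rank u).

Definition dotF2 (r : nat) (u v : 'rV['F_2]_r) : 'F_2 := \sum_(i < r) u 0 i * v 0 i.

(* u_S = d : the coordinates of u indexed by S, in increasing order of index
   (enum S lists S increasingly), equal the entries of d. *)
Definition restr_eq (r : nat) (u : 'rV['F_2]_r) (S : {set 'I_r}) (d : 'rV['F_2]_#|S|) :=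
  [forall i : 'I_#|S|, u 0 (enum_val i) == d 0 i].

Definition Zspan (M : zmodType) (G : M -> Prop) (p : M) : Prop :=
  exists s : seq (int * M),
    (forall i, (i < size s)%N -> G (nth (0%R, 0) s i).2) /\ p = \sum_(x <- s) x.2 *~ x.1.

Definition genL (r : nat) (p : polyAlg r) : Prop :=
  exists v : 'rV['F_2]_r, p = \sum_(u : NZ r | dotF2 (val u) v == 1) avar u.

Definition genR (r : nat) (p : polyAlg r) : Prop :=
  exists (S : {set 'I_r}) (d : 'rV['F_2]_#|S|),
    S != set0 /\ d != 0 /\
    p = (\sum_(u : NZ r | @restr_eq r (val u) S d) avar u) *+ (2 ^ (#|S|.-1))%N.

From HB Require Import structures.
From mathcomp Require Import all_boot all_order all_algebra all_field.
From mathcomp Require Import mpoly ring.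
Set Implicit Arguments. Unset Strict Implicit. Unset Printing Implicit Defensive.
Import Order.TTheory GRing.Theory Num.Theory.
Local Open Scope ring_scope.

(* Both inclusions are coefficientwise identities between indicator functions
   on F_2^r, obtained by expanding characters.  Writing e(x) = (-1)^x, we have
   2 [u.v = 1] = 1 - e(u.v) and e(u.v) = prod_i (1 - 2 [u_i = v_i = 1]);
   expanding the product over subsets J writes sum_{u.v=1} a_u as an integral
   combination of the generators 2^(|J|-1) sum_{u_J = 1} a_u.  Conversely
   2^|S| [u_S = d] = prod_{k in S} (1 + e(u_k) e(d_k)) = sum_{K <= S} e(d_K) e(u.1_K)
   with e(u.1_K) = 1 - 2 [u.1_K = 1], and the constant term sum_K e(d_K) =
   prod_k (1 + e(d_k)) vanishes because some d_k = 1. *)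

Section ZspanTheory.
Variables (M : zmodType) (G : M -> Prop).

Lemma Zspan0 : Zspan G 0.
Proof. by exists [::]; split => //; rewrite big_nil. Qed.

Lemma ZspanD p q : Zspan G p -> Zspan G q -> Zspan G (p + q).
Proof.
case=> s [Gs ->] [t [Gt ->]]; exists (s ++ t); split; last by rewrite big_cat.
move=> i; rewrite size_cat nth_cat; case: ifP => [lt_i_s _|ge_i_s lt_i]; first exact: Gs.
by apply: Gt; rewrite ltn_subLR // leqNgt ge_i_s.
Qed.

Lemma ZspanMz p n : Zspan G p -> Zspan G (p *~ n).
Proof.
case=> s [Gs ->]; exists [seq (x.1 * n, x.2) | x <- s]; split.
  by move=> i; rewrite size_map => lt_i; rewrite (nth_map (0, 0)) //; apply: Gs.
by rewrite big_map mulrz_suml; apply: eq_bigr => x _; rewrite mulrzA.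
Qed.

Lemma Zspan_gen g : G g -> Zspan G g.
Proof. by move=> Gg; exists [:: (1, g)]; split; [case | rewrite big_seq1]. Qed.

Lemma Zspan_sum (I : finType) (P : pred I) (g : I -> M) (n : I -> int) :
  (forall i, P i -> G (g i)) -> Zspan G (\sum_(i | P i) g i *~ n i).
Proof.
move=> Gg; apply: (big_ind (Zspan G)) => [|p q|i Pi]; first exact: Zspan0.
  exact: ZspanD.
by apply/ZspanMz/Zspan_gen/Gg.
Qed.

End ZspanTheory.

Lemma sub_Zspan (M : zmodType) (G1 G2 : M -> Prop) p :
  (forall g, G1 g -> Zspan G2 g) -> Zspan G1 p -> Zspan G2 p.
Proof.
move=> G12 [s [G1s ->]]; elim: s G1s => [|[n g] s IHs] G1s.
  by rewrite big_nil; apply: Zspan0.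
rewrite big_cons; apply: ZspanD; first exact/ZspanMz/G12/(G1s 0%N).
by apply: IHs => i; apply: (G1s i.+1).
Qed.

Section WeightedSums.
Variables (T : finType) (M : zmodType) (x : T -> M).

Lemma sum_pred_mulrnE (P : pred T) k :
  (\sum_(t | P t) x t) *+ k = \sum_t x t *~ ((P t)%:R * k%:R).
Proof.
rewrite -sumrMnl big_mkcond; apply: eq_bigr => t _.
by rewrite -natrM mulrz_nat; case: (P t); rewrite ?mul1n ?mulr0n.
Qed.

Lemma sum_pred_lincomb (I : finType) (A : pred I) (P : pred T) (k : nat)
    (Q : I -> pred T) (m : I -> nat) (n : I -> int) :
  (forall t, (P t)%:R * k%:R = \sum_(i | A i) n i * ((Q i t)%:R * (m i)%:R)) ->
  (\sum_(t | P t) x t) *+ k = \sum_(i | A i) ((\sum_(t | Q i t) x t) *+ m i) *~ n i.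
Proof.
move=> PQ; rewrite sum_pred_mulrnE.
under [RHS]eq_bigr do rewrite sum_pred_mulrnE mulrz_suml.
rewrite exchange_big; apply: eq_bigr => t _; rewrite PQ mulrz_sumr.
by apply: eq_bigr => i _; rewrite -mulrzA mulrC.
Qed.

End WeightedSums.

Lemma expand_prod_add1 (R : comNzRingType) (I : finType) (f : I -> R) :
  \prod_i (f i + 1) = \sum_(K : {set I}) \prod_(i in K) f i.
Proof.
rewrite (bigA_distr (1 : R) +%R f (fun=> 1)).
by apply: eq_bigr => K _; rewrite [RHS]big_mkcond.
Qed.

Lemma prod_nat_bool (R : comNzRingType) (I : finType) (P : pred I) (b : I -> bool) :
  \prod_(i | P i) (b i)%:R = [forall (i | P i), b i]%:R :> R.
Proof.
have natr_andb : {morph (fun c : bool => c%:R : R) : c1 c2 / c1 && c2 >-> c1 * c2}.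
  by move=> c1 c2; rewrite -natrM mulnb.
by rewrite -big_andE (big_morph _ natr_andb (mulr1n 1 : true%:R = 1)).
Qed.

Definition signF2 (x : 'F_2) : int := if x == 0 then 1 else -1.

Lemma signF2D x y : signF2 (x + y) = signF2 x * signF2 y.
Proof. by case: x => [[|[|?]] ?]; case: y => [[|[|?]] ?]. Qed.

Lemma signF2_sum (I : finType) (P : pred I) (f : I -> 'F_2) :
  signF2 (\sum_(i | P i) f i) = \prod_(i | P i) signF2 (f i).
Proof. exact: (big_morph signF2 signF2D). Qed.

Lemma signF2_indicator x : 2 * (x == 1)%:R = 1 - signF2 x.
Proof. by case: x => [[|[|?]] ?]. Qed.

Lemma signF2M x y : signF2 (x * y) = -2 * ((x == 1) && (y == 1))%:R + 1.
Proof. by case: x => [[|[|?]] ?]; case: y => [[|[|?]] ?]. Qed.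

Lemma signF2_eq x y : signF2 x * signF2 y + 1 = 2 * (x == y)%:R.
Proof. by case: x => [[|[|?]] ?]; case: y => [[|[|?]] ?]. Qed.

Lemma signF2_add1_eq0 x : x != 0 -> signF2 x + 1 = 0.
Proof. by case: x => [[|[|?]] ?]. Qed.

Section Indicators.
Variable r : nat.
Implicit Types (w v : 'rV['F_2]_r) (J : {set 'I_r}).

Lemma restr_eq_const1 w J :
  @restr_eq r w J (const_mx 1) = [forall (i | i \in J), w 0 i == 1].
Proof.
apply/forallP/forall_inP => [wJ i iJ|wJ k].
  by have := wJ (enum_rank_in iJ i); rewrite enum_rankK_in // mxE.
by rewrite mxE; apply/wJ/enum_valP.
Qed.

Lemma dotF2_eq1_expansion w v :
  ((dotF2 w v == 1)%:R * 1%:R : int) =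
  \sum_(J | J != set0) ((-1) ^+ #|J|.+1 * [forall (i | i \in J), v 0 i == 1]%:R)
     * ((@restr_eq r w J (const_mx 1))%:R * (2 ^ #|J|.-1)%:R).
Proof.
under [RHS]eq_bigr do rewrite restr_eq_const1.
apply: (@mulfI _ 2) => //.
rewrite mulr1 signF2_indicator /dotF2 signF2_sum.
under eq_bigr do rewrite signF2M.
rewrite expand_prod_add1 (bigD1 set0) //= big_set0 opprD addrA subrr add0r.
rewrite mulr_sumr -sumrN; apply: eq_bigr => J J_neq0.
rewrite big_split /= prodr_const prod_nat_bool.
have -> : [forall (i | i \in J), (w 0 i == 1) && (v 0 i == 1)] =
          [forall (i | i \in J), w 0 i == 1] && [forall (i | i \in J), v 0 i == 1].
  by rewrite -!big_andE -big_split_idem.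
rewrite -mulnb natrM natrX.
have : (0 < #|J|)%N by rewrite card_gt0.
by case: #|J| => [//|j _] /=; rewrite -mulN1r exprMn !exprS; ring.
Qed.

Definition row_ind J : 'rV['F_2]_r := \row_i (i \in J)%:R.

Lemma dotF2_row_ind w J : dotF2 w (row_ind J) = \sum_(i in J) w 0 i.
Proof.
rewrite /dotF2 (bigID (mem J)) /= [X in _ + X]big1 => [|i /negbTE iNJ].
  by rewrite addr0; apply: eq_bigr => i iJ; rewrite mxE iJ mulr1.
by rewrite mxE iNJ mulr0.
Qed.

Lemma restr_eq_expansion (S : {set 'I_r}) (d : 'rV['F_2]_#|S|) w :
  S != set0 -> d != 0 ->
  ((@restr_eq r w S d)%:R * (2 ^ #|S|.-1)%:R : int) =
  \sum_(K : {set 'I_#|S|})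
     (- \prod_(k in K) signF2 (d 0 k))
     * ((dotF2 w (row_ind (enum_val @: K)) == 1)%:R * 1%:R).
Proof.
move=> S_neq0 d_neq0; apply: (@mulfI _ 2) => //.
have [k dk_neq0] : exists k, d 0 k != 0.
  apply/existsP; apply: contraR d_neq0 => /existsPn d0.
  by apply/eqP/rowP => k; rewrite mxE; apply/eqP/negbNE/d0.
have sum_signs0 : \sum_(K : {set 'I_#|S|}) \prod_(k in K) signF2 (d 0 k) = 0.
  by rewrite -expand_prod_add1 (bigD1 k) //= signF2_add1_eq0 // mul0r.
have -> : 2 * ((@restr_eq r w S d)%:R * (2 ^ #|S|.-1)%:R) =
          \prod_k (signF2 (w 0 (enum_val k)) * signF2 (d 0 k) + 1).
  under eq_bigr do rewrite signF2_eq.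
  rewrite big_split /= prodr_const card_ord prod_nat_bool /restr_eq natrX.
  have pow2S : 2 ^+ #|S| = 2 * 2 ^+ #|S|.-1 :> int.
    by rewrite -exprS prednK ?card_gt0.
  by rewrite pow2S; ring.
rewrite expand_prod_add1 -[RHS]add0r -[X in X + _]sum_signs0 mulr_sumr -big_split /=.
apply: eq_bigr => K _.
rewrite dotF2_row_ind (big_imset _ (in2W enum_val_inj)) /= mulr1 mulrCA.
by rewrite signF2_indicator signF2_sum big_split /=; ring.
Qed.

End Indicators.

Lemma genL_in_Zspan_genR r (v : 'rV['F_2]_r) :
  Zspan (@genR r) (\sum_(u : NZ r | dotF2 (val u) v == 1) avar u).
Proof.
rewrite -[X in Zspan _ X]mulr1n.
rewrite (sum_pred_lincomb (@avar r) (fun u => dotF2_eq1_expansion (val u) v)).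
apply: Zspan_sum => J J_neq0; exists J, (const_mx 1); do !split => //.
have : (0 < #|J|)%N by rewrite card_gt0.
by case: #|J| => [//|j] _; apply/eqP => /rowP/(_ ord0); rewrite !mxE.
Qed.

Lemma genR_in_Zspan_genL r (S : {set 'I_r}) (d : 'rV['F_2]_#|S|) :
  S != set0 -> d != 0 ->
  Zspan (@genL r) ((\sum_(u : NZ r | @restr_eq r (val u) S d) avar u) *+ 2 ^ #|S|.-1).
Proof.
move=> S_neq0 d_neq0.
rewrite (sum_pred_lincomb (@avar r) (fun u => restr_eq_expansion (val u) S_neq0 d_neq0)).
by apply: Zspan_sum => K _; exists (row_ind (enum_val @: K)); rewrite mulr1n.
Qed.

Theorem mainTheorem9 (r : nat) (hr : (1 <= r)%N) :
  forall p : polyAlg r, Zspan (@genL r) p <-> Zspan (@genR r) p.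
Proof.
move=> p; split; apply: sub_Zspan => g.
  by case=> v ->; apply: genL_in_Zspan_genR.
by case=> S [d [S_neq0 [d_neq0 ->]]]; apply: genR_in_Zspan_genL.
Qed.
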